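(* Let $A$ be a finite abelian group with $A\cong H\times C$, $H$ a finite abelian group and $C$ cyclic. Let $M$ be a finite $\mathbb{Z}_p[A]$-module on which $H$ acts trivially and with $M^C\cong\mathbb{F}_p$. Then $N_{\mathrm{typical}}(A,M)$ is contained in the image of the (injective) inflation map $H^2(H,M^C)\to H^2(A,M)$.
   Context: For a finite abelian group $D$, subgroup $I$ with $D/I$ cyclic and finite $D$-module $M$: $\widehat D:=\hat{\mathbb{Z}}\times_{D/I}D$ (fiber product of the quotient maps), $R(D,I,M):=\ker(H^2(D,M)\xrightarrow{\inf}H^2(\widehat D,M))$. $\mathcal{C}$ is the set of pairs $(D,I)$ with $D\le A$ generated by at most two elements, $I\le D$ cyclic with $D/I$ cyclic. $N_{\mathrm{typical}}(A,M):=\ker\bigl(H^2(A,M)\to\bigoplus_{(D,I)\in\mathcal{C}}H^2(D,M)/R(D,I,M)\bigr)$, the maps being restrictions. *)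

From HB Require Import structures.
From mathcomp Require Import all_boot all_fingroup all_algebra all_solvable.
Set Implicit Arguments.
Unset Strict Implicit.
Unset Printing Implicit Defensive.
Import GRing.Theory.
Local Open Scope ring_scope.

Section Defs.
Variables (gT : finGroupType) (M : finZmodType).

Definition is_module_action (G : {set gT}) (act : gT -> M -> M) : Prop :=
  (forall m, act 1%g m = m) /\
  (forall x y m, x \in G -> y \in G -> act (x * y)%g m = act x (act y m)) /\
  (forall x m1 m2, x \in G -> act x (m1 + m2) = act x m1 + act x m2).

Definition fixedpts (act : gT -> M -> M) (C : {set gT}) : {set M} :=
  [set m : M | [forall c in C, act c m == m]].

Definition cocycle2 (G : {set gT}) (act : gT -> M -> M) (f : gT -> gT -> M) : Prop :=
  forall x y z, x \in G -> y \in G -> z \in G ->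
    act x (f y z) - f (x * y)%g z + f x (y * z)%g - f x y = 0.

Definition coboundary2 (G : {set gT}) (act : gT -> M -> M) (f : gT -> gT -> M) : Prop :=
  exists g : gT -> M, forall x y, x \in G -> y \in G ->
    f x y = act x (g y) - g (x * y)%g + g x.

(* The profinite integers Zhat = lim_n Z/(n+1): a point is a compatible family
   z with z n the residue modulo n.+1. *)
Definition zhat (z : nat -> nat) : Prop :=
  (forall n, z n < n.+1)%N /\
  (forall m n, (m.+1 %| n.+1)%N -> (z n %% m.+1)%N = z m).

Definition zhat_add (z1 z2 : nat -> nat) : nat -> nat :=
  fun n => ((z1 n + z2 n) %% n.+1)%N.

(* Dhat = Zhat x_{D/I} D, where Zhat -> D/I is the quotient map
   z |-> (x0 I)^z  (x0 I a generator of the cyclic group D/I, k = |D/I|). *)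
Definition in_Dhat (D I : {set gT}) (x0 : gT) (z : nat -> nat) (d : gT) : Prop :=
  zhat z /\ d \in D /\ d \in (x0 ^+ z (#|D : I|.-1) *: I)%g.

(* Continuity of a cochain g : Dhat -> M (M discrete) for the topology induced
   by Zhat x D (Zhat with the inverse-limit topology, D discrete): g is locally
   constant, with the basic open neighbourhoods {(z',d) | z' N = z N}. *)
Definition Dhat_continuous (D I : {set gT}) (x0 : gT)
    (g : (nat -> nat) -> gT -> M) : Prop :=
  forall z d, in_Dhat D I x0 z d ->
    exists N, forall z', in_Dhat D I x0 z' d -> z' N = z N -> g z' d = g z d.

(* The class of the 2-cocycle f (on D) lies in
   R(D,I,M) = ker(H^2(D,M) --inf--> H^2(Dhat,M)) (continuous cohomology):
   its inflation is the coboundary of a continuous 1-cochain on Dhat. *)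
Definition in_R (D I : {group gT}) (act : gT -> M -> M) (f : gT -> gT -> M) : Prop :=
  exists x0, x0 \in D /\ (D / I)%g = <[coset I x0]>%g /\
  exists g : (nat -> nat) -> gT -> M, Dhat_continuous D I x0 g /\
    forall z1 d1 z2 d2, in_Dhat D I x0 z1 d1 -> in_Dhat D I x0 z2 d2 ->
      f d1 d2 = act d1 (g z2 d2) - g (zhat_add z1 z2) (d1 * d2)%g + g z1 d1.

Definition typical_pair (A D I : {group gT}) : Prop :=
  D \subset A /\
  (exists x y, x \in A /\ y \in A /\ (D :=: <<[set x; y]>>)%g) /\
  I \subset D /\ cyclic I /\ cyclic (D / I)%g.

Definition in_Ntypical (A : {group gT}) (act : gT -> M -> M) (f : gT -> gT -> M) : Prop :=
  forall D I : {group gT}, typical_pair A D I -> in_R D I act f.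

(* inflation along the projection A = H \x C -> H  (a = h c |-> h) *)
Definition infl_dprod (H C : {set gT}) (h : gT -> gT -> M) : gT -> gT -> M :=
  fun a b => h (remgr C H a) (remgr C H b).

End Defs.

From HB Require Import structures.
From mathcomp Require Import all_boot all_fingroup all_algebra all_solvable.
From Stdlib Require Import FunctionalExtensionality.
Import GRing.Theory.
Local Open Scope ring_scope.
Set Implicit Arguments.
Unset Strict Implicit.
Unset Printing Implicit Defensive.

(* The hypothesis in_Ntypical is used only through the typical pairs
   (<<x, c>>, C), with c a generator of C and x in H: evaluating the
   trivialising cochain on Dhat at integer points shows that f is a coboundary
   on C and that f x d - f d x = d.w(x) - w(x) for d in C.  From these two facts
   a cochain k is built such that f + dk is inflated from H;
   the cocycle identity at (d, x, y) then forces its values to be C-invariant.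
   Injectivity: comparing a trivialising cochain g of an inflated class at
   (d, x) and (x, d) shows that g is C-invariant on H. *)

(* Identities in an abelian group are decided by comparing integer coefficients
   of the atoms on both sides. *)
Inductive zmod_term := ZAtom of nat | ZAdd of zmod_term & zmod_term | ZOpp of zmod_term | ZZero.

Section ZmodNormalization.
Variable V : zmodType.

Fixpoint zmod_eval (env : seq V) (t : zmod_term) : V :=
  match t with
  | ZAtom n => env`_n
  | ZAdd a b => zmod_eval env a + zmod_eval env b
  | ZOpp a => - zmod_eval env a
  | ZZero => 0
  end.

Fixpoint zmod_coef (t : zmod_term) (i : nat) : int :=
  match t with
  | ZAtom n => (n == i)%:Z
  | ZAdd a b => zmod_coef a i + zmod_coef b i
  | ZOpp a => - zmod_coef a i
  | ZZero => 0
  end.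

Lemma zmod_evalE env t : zmod_eval env t = \sum_(i < size env) env`_i *~ zmod_coef t i.
Proof.
elim: t => [n|a IHa b IHb|a IHa|] /=.
- have [ltn|len] := ltnP n (size env).
    rewrite (bigD1 (Ordinal ltn)) //= eqxx big1 ?addr0 // => i /eqP neq.
    by case: eqP => // eq_n; case: neq; apply: val_inj.
  rewrite nth_default // big1 // => i _.
  by case: eqP => // eq_n; move: (ltn_ord i); rewrite -eq_n ltnNge len.
- by rewrite IHa IHb -big_split; apply: eq_bigr => i _; rewrite mulrzDr.
- by rewrite IHa -sumrN; apply: eq_bigr => i _; rewrite mulrNz.
- by rewrite big1.
Qed.

Lemma zmod_eval_eq env t1 t2 :
  all (fun i => zmod_coef t1 i == zmod_coef t2 i) (iota 0 (size env)) ->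
  zmod_eval env t1 = zmod_eval env t2.
Proof.
move/allP=> eq_coef; rewrite !zmod_evalE; apply: eq_bigr => i _.
by rewrite (eqP (eq_coef i _)) // mem_iota add0n ltn_ord.
Qed.

End ZmodNormalization.

Ltac zmod_index x l :=
  lazymatch l with
  | (?y :: ?l') =>
    match constr:(tt) with
    | _ => let _ := constr:(@erefl _ x : x = y) in constr:(0%N)
    | _ => let n := zmod_index x l' in constr:(S n)
    end
  end.

Ltac zmod_atoms t l :=
  lazymatch t with
  | (?a + ?b)%R => let l1 := zmod_atoms a l in zmod_atoms b l1
  | (- ?a)%R => zmod_atoms a l
  | 0%R => l
  | _ => match constr:(tt) with
         | _ => let _ := zmod_index t l in l
         | _ => constr:(t :: l)
         end
  end.

Ltac zmod_reify t l :=
  lazymatch t with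
  | (?a + ?b)%R =>
      let ra := zmod_reify a l in let rb := zmod_reify b l in constr:(ZAdd ra rb)
  | (- ?a)%R => let ra := zmod_reify a l in constr:(ZOpp ra)
  | 0%R => constr:(ZZero)
  | _ => let n := zmod_index t l in constr:(ZAtom n)
  end.

Ltac zmod_eq :=
  lazymatch goal with
  | |- @eq ?V ?l ?r =>
    let env := zmod_atoms r ltac:(zmod_atoms l (@nil V)) in
    let tl := zmod_reify l env in
    let tr := zmod_reify r env in
    change (zmod_eval env tl = zmod_eval env tr);
    apply: zmod_eval_eq; vm_compute; reflexivity
  end.

Definition add_coboundary (gT : finGroupType) (M : finZmodType)
    (act : gT -> M -> M) (f : gT -> gT -> M) (k : gT -> M) : gT -> gT -> M :=
  fun a b => f a b + act a (k b) - k (a * b)%g + k a.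

Lemma eq_sub_transfer (V : zmodType) (a b c d : V) : c = d -> a - b = c - d -> a = b.
Proof. by move=> -> /eqP; rewrite subrr subr_eq0 => /eqP. Qed.

Section ModuleCohomology.
Variables (gT : finGroupType) (M : finZmodType) (A : {group gT}) (act : gT -> M -> M).
Hypothesis actA : is_module_action A act.

Lemma mact1 m : act 1%g m = m.
Proof. by case: actA. Qed.

Lemma mactM x y m : x \in A -> y \in A -> act (x * y)%g m = act x (act y m).
Proof. by case: actA => _ [+ _]; apply. Qed.

Lemma mactD x m1 m2 : x \in A -> act x (m1 + m2) = act x m1 + act x m2.
Proof. by case: actA => _ [_ +]; apply. Qed.

Lemma mact0 x : x \in A -> act x 0 = 0.
Proof. by move=> Ax; apply: (addrI (act x 0)); rewrite addr0 -mactD // addr0. Qed.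

Lemma mactN x m : x \in A -> act x (- m) = - act x m.
Proof. by move=> Ax; apply/eqP; rewrite -addr_eq0 -mactD // addNr mact0. Qed.

Lemma module_action_sub (K : {group gT}) : K \subset A -> is_module_action K act.
Proof.
case: actA => act1 [actMA actDA] sKA.
by split=> //; split=> *; [apply: actMA | apply: actDA]; apply: (subsetP sKA).
Qed.

Variable f : gT -> gT -> M.
Hypothesis f_cocycle : cocycle2 A act f.

Lemma cocycle2E x y z : x \in A -> y \in A -> z \in A ->
  act x (f y z) = f (x * y)%g z - f x (y * z)%g + f x y.
Proof.
move=> Ax Ay Az; have := f_cocycle Ax Ay Az.
by move/eqP; rewrite subr_eq0 => /eqP <-; zmod_eq.
Qed.

Lemma cocycle2_1l z : z \in A -> f 1%g z = f 1%g 1%g.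
Proof.
move=> Az; have := cocycle2E (group1 A) (group1 A) Az.
by rewrite mact1 // !mul1g => ->; zmod_eq.
Qed.

Lemma cocycle2_r1 x : x \in A -> f x 1%g = act x (f 1%g 1%g).
Proof. by move=> Ax; rewrite cocycle2E ?mulg1 //; zmod_eq. Qed.

Lemma cocycle2_add_coboundary k : cocycle2 A act (add_coboundary act f k).
Proof.
move=> x y z Ax Ay Az; rewrite /add_coboundary.
rewrite !mactD ?mactN // -mactM // cocycle2E // !mulgA; zmod_eq.
Qed.

Lemma coboundary2_sub_add_coboundary k (F : gT -> gT -> M) :
  {in A &, forall a b, add_coboundary act f k a b = F a b} ->
  coboundary2 A act (fun a b => f a b - F a b).
Proof.
move=> eqF; exists (fun a => - k a) => a b Aa Ab.
by rewrite -eqF // /add_coboundary mactN //; zmod_eq.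
Qed.

Definition ext_mul (u v : M * gT) : M * gT :=
  (u.1 + act u.2 v.1 + f u.2 v.2, (u.2 * v.2)%g).

Lemma ext_mulA u v w : u.2 \in A -> v.2 \in A -> w.2 \in A ->
  ext_mul (ext_mul u v) w = ext_mul u (ext_mul v w).
Proof.
case: u v w => [m1 a] [m2 b] [m3 c] /= Aa Ab Ac; rewrite /ext_mul /= mulgA.
by congr pair; rewrite !mactD ?groupM // -mactM // cocycle2E //; zmod_eq.
Qed.

End ModuleCohomology.

Definition zhat_of_nat (j : nat) : nat -> nat := fun n => (j %% n.+1)%N.

Lemma zhat_of_natP j : zhat (zhat_of_nat j).
Proof. by split=> [n|m n dvd_mn]; rewrite /zhat_of_nat ?ltn_pmod ?modn_dvdm. Qed.

Lemma zhat_add_of_nat i j : zhat_add (zhat_of_nat i) (zhat_of_nat j) = zhat_of_nat (i + j).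
Proof. by apply: functional_extensionality => n; rewrite /zhat_add modnDm. Qed.

Section DhatIntegralPoints.
Variables (gT : finGroupType) (D I : {group gT}) (x0 : gT).

Lemma in_Dhat_of_nat j y :
  y \in D -> y \in (x0 ^+ (j %% #|D : I|%g) *: I)%g -> in_Dhat D I x0 (zhat_of_nat j) y.
Proof.
by move=> Dy; split; [exact: zhat_of_natP | rewrite /zhat_of_nat prednK ?indexg_gt0].
Qed.

Lemma in_Dhat_kernel d : I \subset D -> d \in I -> in_Dhat D I x0 (zhat_of_nat 0) d.
Proof.
move=> sID Id; apply: in_Dhat_of_nat; first exact: (subsetP sID).
by rewrite mod0n expg0 mul1g.
Qed.

Lemma in_Dhat_integral_lift y :
  D \subset 'N(I)%g -> x0 \in D -> (D / I)%g = <[coset I x0]>%g -> y \in D ->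
  exists j, in_Dhat D I x0 (zhat_of_nat j) y.
Proof.
move=> nID Dx0 defDI Dy.
have /cyclePmin[j lt_j_x0 def_y] : coset I y \in <[coset I x0]>%g.
  by rewrite -defDI mem_quotient.
have ord_x0 : #[coset I x0]%g = #|D : I|%g by rewrite /order -defDI card_quotient.
exists j; apply: in_Dhat_of_nat => //; rewrite -ord_x0 modn_small //.
have Nx0j : (x0 ^+ j)%g \in 'N(I)%g by rewrite groupX // (subsetP nID).
rewrite -norm_rlcoset //; apply/rcoset_kercosetP => //; first exact: (subsetP nID).
by rewrite def_y morphX // (subsetP nID).
Qed.

End DhatIntegralPoints.

Section InR.
Variables (gT : finGroupType) (M : finZmodType) (D I : {group gT}).
Variables (act : gT -> M -> M) (f : gT -> gT -> M).
Hypotheses (sID : I \subset D) (f_R : in_R D I act f).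

Lemma in_R_coboundary2 : coboundary2 I act f.
Proof.
have [x0 [_ [_ [g [_ f_dg]]]]] := f_R.
exists (g (zhat_of_nat 0)) => d1 d2 Id1 Id2.
by rewrite (f_dg _ _ _ _ (in_Dhat_kernel _ sID Id1) (in_Dhat_kernel _ sID Id2)) zhat_add_of_nat.
Qed.

(* x and d lift to the commuting points (j, x) and (0, d) of Dhat. *)
Lemma in_R_commutator x :
  abelian D -> is_module_action D act -> x \in D -> (forall m, act x m = m) ->
  exists w, {in I, forall d, f x d - f d x = act d w - w}.
Proof.
move=> abD actD Dx act_x.
have [x0 [Dx0 [defDI [g [_ f_dg]]]]] := f_R.
have [j Dhat_x] := in_Dhat_integral_lift (sub_abelian_norm abD sID) Dx0 defDI Dx.
exists (- g (zhat_of_nat j) x) => d Id.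
have Dd := subsetP sID d Id.
have Dhat_d := in_Dhat_kernel x0 sID Id.
rewrite (f_dg _ _ _ _ Dhat_x Dhat_d) (f_dg _ _ _ _ Dhat_d Dhat_x).
rewrite !zhat_add_of_nat addn0 add0n act_x (mactN actD) // (centsP abD x Dx d Dd).
zmod_eq.
Qed.

End InR.

Lemma typical_pair_join_cycle (gT : finGroupType) (A C : {group gT}) (x c : gT) :
  abelian A -> C :=: <[c]>%g -> c \in A -> x \in A ->
  typical_pair A <<[set x; c]>>%G C.
Proof.
move=> abA defC Ac Ax; set D := <<[set x; c]>>%G.
have sDA : D \subset A by rewrite gen_subG; apply/subsetP => y; rewrite !inE => /pred2P[]->.
have sCD : C \subset D by rewrite defC cycle_subG mem_gen // !inE eqxx orbT.
have nCx : x \in 'N(C)%g := subsetP (sub_abelian_norm abA (subset_trans sCD sDA)) x Ax.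
have sDxC : D \subset (<[x]> <*> C)%g.
  rewrite gen_subG; apply/subsetP => y; rewrite !inE => /pred2P[]->.
    by rewrite mem_gen // inE cycle_id.
  by rewrite mem_gen // inE defC cycle_id orbT.
split=> //; split; first by exists x, c.
split=> //; split; first by rewrite defC cycle_cyclic.
apply: cyclicS (quotientS C sDxC) _.
by rewrite /= quotientYidr ?cycle_subG // quotient_cyclic ?cycle_cyclic.
Qed.

Section DirectProduct.
Variables (gT : finGroupType) (M : finZmodType) (A H C : {group gT}).
Variable act : gT -> M -> M.
Hypotheses (abA : abelian A) (defA : (H \x C)%g = A) (actA : is_module_action A act).

Let defA' : (C \x H)%g = A. Proof. by rewrite dprodC. Qed.
Let tiCH : C :&: H = 1%g. Proof. by case/dprodP: defA'. Qed.
Let sHA : H \subset A. Proof. by case/dprodP: defA => _ <- _ _; apply: mulG_subl. Qed.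
Let sCA : C \subset A. Proof. by case/dprodP: defA => _ <- _ _; apply: mulG_subr. Qed.
Let remH a : a \in A -> remgr C H a \in H.
Proof. by move=> Aa; apply: mem_remgr; case/dprodP: defA' => _ ->. Qed.
Let divC a : a \in A -> divgr C H a \in C.
Proof. by move=> Aa; apply: mem_divgr; case/dprodP: defA' => _ ->. Qed.

Lemma infl_dprod_id (h : gT -> gT -> M) x y :
  x \in H -> y \in H -> infl_dprod H C h x y = h x y.
Proof. by move=> Hx Hy; rewrite /infl_dprod !remgr_id. Qed.

Section Inflated.
Variables (F : gT -> gT -> M) (h : gT -> gT -> M).
Hypotheses (F_cocycle : cocycle2 A act F)
           (F_infl : {in A &, forall a b, F a b = infl_dprod H C h a b}).

Lemma cocycle2_inflated : cocycle2 H act h.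
Proof.
move=> x y z Hx Hy Hz; have HA := subsetP sHA.
have := F_cocycle (HA x Hx) (HA y Hy) (HA z Hz).
by rewrite !F_infl ?groupM ?HA // !infl_dprod_id ?groupM.
Qed.

(* The cocycle identity at (d, x, y) with d in C reads d.h(x,y) - h(x,y) = 0,
   because h(1, -) is constant. *)
Lemma inflated_fixed x y : x \in H -> y \in H -> h x y \in fixedpts act C.
Proof.
move=> Hx Hy; rewrite inE; apply/forall_inP => d Cd.
have [Ax Ay Ad] := And3 (subsetP sHA x Hx) (subsetP sHA y Hy) (subsetP sCA d Cd).
have h1 := cocycle2_1l (module_action_sub actA sHA) cocycle2_inflated.
have := F_cocycle Ad Ax Ay; rewrite !F_infl ?groupM // /infl_dprod.
rewrite [remgr C H d]remgr1 // (remgrMid tiCH) // !(remgr_id tiCH) ?groupM //.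
by rewrite !h1 ?groupM // => eq0; apply/eqP; apply: (eq_sub_transfer eq0); zmod_eq.
Qed.

End Inflated.

Hypothesis actH : forall x m, x \in H -> act x m = m.

Lemma infl_coboundary_fixed (h : gT -> gT -> M) (g : gT -> M) :
  cocycle2 H act h ->
  {in A &, forall a b, infl_dprod H C h a b = act a (g b) - g (a * b)%g + g a} ->
  {in H, forall x, g x \in fixedpts act C}.
Proof.
move=> h_cocycle dg x Hx; rewrite inE; apply/forall_inP => d Cd; apply/eqP.
have [Ax Ad] := conj (subsetP sHA x Hx) (subsetP sCA d Cd).
have actH_mod := module_action_sub actA sHA.
have := dg _ _ Ad Ax; have := dg _ _ Ax Ad.
rewrite /infl_dprod [remgr C H d]remgr1 // !(remgr_id tiCH) //.
rewrite (cocycle2_r1 h_cocycle) // (cocycle2_1l actH_mod h_cocycle) // actH //.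
rewrite actH // (centsP abA x Ax d Ad) => h_xd h_dx.
by apply: (eq_sub_transfer (etrans (esym h_dx) h_xd)); zmod_eq.
Qed.

Lemma in_Ntypical_restrictions f : cyclic C -> in_Ntypical A act f ->
  coboundary2 C act f /\
  exists w : gT -> M, {in H & C, forall x d, f x d - f d x = act d (w x) - w x}.
Proof.
move=> cycC f_typical; have [c defC] := cyclicP cycC.
have Ac : c \in A by rewrite (subsetP sCA) // defC cycle_id.
have typical x : x \in H -> typical_pair A <<[set x; c]>>%G C.
  by move=> Hx; apply: typical_pair_join_cycle; rewrite // (subsetP sHA).
split.
  have [_ [_ [sCD _]]] := typical 1%g (group1 H).
  exact: in_R_coboundary2 sCD (f_typical _ _ (typical 1%g (group1 H))).
have /fin_all_exists[w f_comm] : forall x, exists w : M,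
    x \in H -> {in C, forall d, f x d - f d x = act d w - w}.
  move=> x; have [Hx|_] := boolP (x \in H); last by exists 0.
  have [sDA [_ [sCD _]]] := typical x Hx.
  have Dx : x \in <<[set x; c]>>%G by rewrite mem_gen // !inE eqxx.
  have [w f_comm] := in_R_commutator sCD (f_typical _ _ (typical x Hx))
    (abelianS sDA abA) (module_action_sub actA sDA) Dx (fun m => actH m Hx).
  by exists w.
by exists w => x d Hx; apply: f_comm.
Qed.

Section Splitting.
Variables (f : gT -> gT -> M) (g0 w : gT -> M).
Hypotheses (f_cocycle : cocycle2 A act f)
  (f_C : {in C &, forall d1 d2, f d1 d2 = act d1 (g0 d2) - g0 (d1 * d2)%g + g0 d1})
  (f_comm : {in H & C, forall x d, f x d - f d x = act d (w x) - w x}).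

(* In the extension E of A by M defined by f, the hypotheses say that
   r : C -> E is a homomorphism and that the lifts s x of x in H commute with
   its image; the section a = d x |-> s x * r d then carries the cocycle of s. *)
Local Notation mul := (ext_mul act f).
Let mulA := ext_mulA actA f_cocycle.
Let s x : M * gT := (w x, x).
Let r d : M * gT := (- g0 d, d).
Let k a := (mul (s (remgr C H a)) (r (divgr C H a))).1.

Let r_morph : {in C &, forall d d', mul (r d) (r d') = r (d * d')%g}.
Proof.
move=> d d' Cd Cd'; rewrite /mul /ext_mul /= f_C // (mactN actA) ?(subsetP sCA) //.
by congr pair; zmod_eq.
Qed.

Let s_r_commute : {in H & C, forall x d, mul (s x) (r d) = mul (r d) (s x)}.
Proof.
move=> x d Hx Cd; have [Ax Ad] := conj (subsetP sHA x Hx) (subsetP sCA d Cd).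
rewrite /mul /ext_mul /= actH // (centsP abA x Ax d Ad); congr pair.
by move/eqP: (f_comm Hx Cd); rewrite subr_eq => /eqP ->; zmod_eq.
Qed.

Let section_lift a : a \in A -> mul (s (remgr C H a)) (r (divgr C H a)) = (k a, a).
Proof.
move=> Aa; rewrite [LHS]surjective_pairing; congr pair => /=.
rewrite [in RHS](divgr_eq C H a).
by apply: (centsP abA); [exact: subsetP sHA _ (remH Aa) | exact: subsetP sCA _ (divC Aa)].
Qed.

Let section_mul x y d d' : x \in H -> y \in H -> d \in C -> d' \in C ->
  mul (mul (s x) (r d)) (mul (s y) (r d')) = mul (mul (s x) (s y)) (r (d * d')%g).
Proof.
move=> Hx Hy Cd Cd'; have [Ax Ay] := conj (subsetP sHA x Hx) (subsetP sHA y Hy).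
have [Ad Ad'] := conj (subsetP sCA d Cd) (subsetP sCA d' Cd').
rewrite [LHS]mulA /= ?groupM // -(@mulA (r d) (s y) (r d')) //.
rewrite -s_r_commute // (@mulA (s y) (r d) (r d')) // r_morph //.
by rewrite -(@mulA (s x) (s y)) /= ?groupM.
Qed.

Lemma cohomologous_to_inflation :
  exists k, {in A &, forall a b,
    add_coboundary act f k a b = infl_dprod H C (add_coboundary act f w) a b}.
Proof.
exists k => a b Aa Ab; rewrite /infl_dprod.
have [Hx Hy] := conj (remH Aa) (remH Ab); have [Cd Cd'] := conj (divC Aa) (divC Ab).
have ab_split : (a * b = (divgr C H a * divgr C H b) * (remgr C H a * remgr C H b))%g.
  rewrite {1}(divgr_eq C H a) {1}(divgr_eq C H b) mulgA -(mulgA (divgr C H a)).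
  by rewrite (centsP abA _ (subsetP sHA _ Hx) _ (subsetP sCA _ Cd')) !mulgA.
have k_ab : k (a * b)%g =
    (mul (s (remgr C H a * remgr C H b)%g) (r (divgr C H a * divgr C H b)%g)).1.
  by rewrite ab_split /k (remgrMid tiCH) ?(divgrMid tiCH) // groupM.
have lift_ab : mul (k a, a) (k b, b) =
    mul (mul (s (remgr C H a)) (s (remgr C H b))) (r (divgr C H a * divgr C H b)%g).
  by rewrite -!section_lift // section_mul.
have := congr1 fst lift_ab; rewrite /add_coboundary k_ab /= => lift_ab1.
by apply: (eq_sub_transfer lift_ab1); zmod_eq.
Qed.

End Splitting.

End DirectProduct.

Theorem mainTheorem12 (gT : finGroupType) (A H C : {group gT}) (p : nat)
    (M : finZmodType) (act : gT -> M -> M) :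
  abelian A -> (H \x C)%g = A -> cyclic C ->
  prime p -> p.-nat #|M| ->
  is_module_action A act ->
  (forall h m, h \in H -> act h m = m) ->
  #|fixedpts act C| = p ->
  (* N_typical(A,M) is contained in the image of inflation H^2(H,M^C) -> H^2(A,M) *)
  (forall f : gT -> gT -> M, cocycle2 A act f -> in_Ntypical A act f ->
     exists h : gT -> gT -> M,
       cocycle2 H act h /\
       (forall x y, x \in H -> y \in H -> h x y \in fixedpts act C) /\
       coboundary2 A act (fun a b => f a b - infl_dprod H C h a b)) /\
  (* and this inflation map is injective *)
  (forall h : gT -> gT -> M,
     cocycle2 H act h ->
     (forall x y, x \in H -> y \in H -> h x y \in fixedpts act C) ->
     coboundary2 A act (infl_dprod H C h) ->
     exists g : gT -> M,
       (forall x, x \in H -> g x \in fixedpts act C) /\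
       (forall x y, x \in H -> y \in H -> h x y = act x (g y) - g (x * y)%g + g x)).
Proof.
move=> abA defA cycC _ _ actA actH _; split.
- move=> f f_cocycle f_typical.
  have [[g0 f_C] [w f_comm]] := in_Ntypical_restrictions abA defA actA actH cycC f_typical.
  have [k f_k] := cohomologous_to_inflation abA defA actA actH f_cocycle f_C f_comm.
  have F_cocycle := cocycle2_add_coboundary actA f_cocycle k.
  exists (add_coboundary act f w); split; [|split].
  + exact (cocycle2_inflated defA F_cocycle f_k).
  + exact (inflated_fixed defA actA F_cocycle f_k).
  + exact (coboundary2_sub_add_coboundary actA f_k).
- move=> h h_cocycle _ [g dg].
  have sHA : H \subset A by case/dprodP: defA => _ <- _ _; apply: mulG_subl.
  exists g; split; first exact (infl_coboundary_fixed abA defA actA actH h_cocycle dg).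
  by move=> x y Hx Hy; rewrite -dg ?(subsetP sHA) // (infl_dprod_id defA).
Qed.
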